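(* Let $a>1$ and $b>1$ be integers, let $n=a+b-1$, and consider the 1-connected $(a,b)$-puzzle on $V=\{1,2,\dots,n\}$, i.e. the cycle set consisting of the two cycles $\alpha=(1\ 2\ \dots\ a)$ and $\beta=(a\ a+1\ \dots\ n)$. Its configuration group $H=\langle \alpha,\beta\rangle\le S_n$ is the alternating group $A_n$ if both $a$ and $b$ are odd, and it is the symmetric group $S_n$ otherwise. Moreover, any permutation in $H$ can be generated in $O(n^2)$ shifts; that is, there is an absolute constant $K$ (independent of $a,b$) such that every element of $H$ is a product of at most $Kn^2$ factors, each of which is one of $\alpha,\alpha^{-1},\beta,\beta^{-1}$.
   Context: Permutations are written in cycle notation. Shifting the tokens (one on each vertex of $V$) along a cycle $(v_1\ v_2\ \dots\ v_j)$ in either direction corresponds to applying the permutation $(v_1\ v_2\ \dots\ v_j)$ or its inverse; a ''shift'' is one such application. The configuration group of a cycle set is the subgroup of $S_n$ generated by the permutations corresponding to its cycles. $A_n$ denotes the group of even permutations and $S_n$ the group of all permutations of $\{1,\dots,n\}$. *)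

From mathcomp Require Import all_boot all_order all_fingroup all_solvable.
Set Implicit Arguments. Unset Strict Implicit. Unset Printing Implicit Defensive.

(* If s is not
   duplicate-free, we take the identity (junk value, never used below). *)
Definition cyc_fun (T : finType) (s : seq T) (x : T) : T :=
  if uniq s then next s x else x.

Lemma cyc_fun_inj (T : finType) (s : seq T) : injective (cyc_fun s).
Proof.
rewrite /cyc_fun; case Us: (uniq s) => x y //.
exact: (can_inj (prev_next Us)).
Qed.

Definition cyc (T : finType) (s : seq T) : {perm T} := perm (@cyc_fun_inj T s).

(* Vertices 1..n are encoded as 0..n-1 : 'I_n, with n = a + b - 1.
   alpha = (1 2 ... a)       ~ cycle on 0, 1, ..., a-1 (increasing order)
   beta  = (a a+1 ... n)     ~ cycle on a-1, a, ..., n-1 (increasing order) *)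
Definition puzzle_alpha (a b : nat) : {perm 'I_(a + b - 1)} :=
  cyc [seq i : 'I_(a + b - 1) <- enum 'I_(a + b - 1) | (i < a)%N].

Definition puzzle_beta (a b : nat) : {perm 'I_(a + b - 1)} :=
  cyc [seq i : 'I_(a + b - 1) <- enum 'I_(a + b - 1) | (a - 1 <= i)%N].

Definition puzzle_group (a b : nat) : {set {perm 'I_(a + b - 1)}} :=
  <<[set puzzle_alpha a b; puzzle_beta a b]>>%g.

Definition puzzle_shifts (a b : nat) : seq {perm 'I_(a + b - 1)} :=
  [:: puzzle_alpha a b; (puzzle_alpha a b)^-1; puzzle_beta a b; (puzzle_beta a b)^-1]%g.

From mathcomp Require Import all_boot all_order all_fingroup all_solvable zify.
Set Implicit Arguments. Unset Strict Implicit. Unset Printing Implicit Defensive.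

(* beta * alpha is the long cycle x |-> x + 1 (mod n), and the commutator
   alpha beta^-1 alpha^-1 beta is the 3-cycle (a-2 a-1 a) on the 0-based
   vertices.  Conjugating it by powers of the long cycle gives every 3-cycle
   (k k+1 k+2).  A product of d consecutive such 3-cycles telescopes into a
   word of length O(n + d) and carries one vertex d places up while fixing
   everything above, so an even permutation is put in place one vertex at a
   time, from the top down, with O(n) shifts per vertex.  As alpha and beta
   are cycles of lengths a and b, H = A_n when a and b are odd; otherwise an
   odd generator times A_n gives all of S_n. *)

Local Open Scope group_scope.

Section Words.
Variables (gT : groupType) (S : seq gT).

Definition word_le (m : nat) (g : gT) : Prop :=
  exists s : seq gT, [/\ all (fun x => x \in S) s, (size s <= m)%N & g = \prod_(x <- s) x].

Lemma word_leW m m' g : word_le m g -> (m <= m')%N -> word_le m' g.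
Proof. by move=> [s [sS le_s ->]] le_mm'; exists s; split=> //; apply: leq_trans le_mm'. Qed.

Lemma word_le1 : word_le 0 1.
Proof. by exists [::]; rewrite big_nil. Qed.

Lemma word_le_letter x : x \in S -> word_le 1 x.
Proof. by move=> Sx; exists [:: x]; rewrite big_seq1 /= Sx. Qed.

Lemma word_leM m k g h : word_le m g -> word_le k h -> word_le (m + k) (g * h).
Proof.
move=> [s [sS le_s ->]] [t [tS le_t ->]]; exists (s ++ t).
by rewrite all_cat sS tS size_cat big_cat leq_add.
Qed.

Lemma word_leX m k g : word_le m g -> word_le (m * k) (g ^+ k).
Proof.
move=> wg; elim: k => [|k IHk]; first by rewrite muln0 expg0; apply: word_le1.
by rewrite mulnS expgS; apply: word_leM.
Qed.

Hypothesis S_inv : {in S, forall x, x^-1 \in S}.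

Lemma word_leV m g : word_le m g -> word_le m g^-1.
Proof.
move=> [s [sS le_s ->]]; exists (rev (map (fun x => x^-1) s)); rewrite size_rev size_map.
split=> //; first by rewrite all_rev all_map; apply/allP=> x /(allP sS)/S_inv.
elim: s {sS le_s} => [|x s IHs]; first by rewrite big_nil invg1.
by rewrite /= rev_cons big_cons invMg IHs -cats1 big_cat big_seq1.
Qed.

Lemma word_leJ m k g h : word_le m g -> word_le k h -> word_le (k + m + k) (g ^ h).
Proof.
move=> wg wh; rewrite conjgE mulgA.
by apply: word_leM => //; apply: word_leM => //; apply: word_leV.
Qed.

End Words.

Lemma word_le_mem (gT : finGroupType) (S : seq gT) (G : {group gT}) m g :
  {subset S <= G} -> word_le S m g -> g \in G.
Proof. by move=> sSG [s [sS _ ->]]; rewrite big_seq; apply: group_prod => x /(allP sS)/sSG. Qed.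

Lemma prod_conjg_expg (gT : groupType) (x y : gT) d :
  \prod_(j < d) x ^ (y ^+ j) = (x * y^-1) ^+ d * y ^+ d.
Proof.
elim: d => [|d IHd]; first by rewrite big_ord0 !expg0 mulg1.
by rewrite big_ord_recr /= IHd conjgE expgSr expgS -!mulgA mulKVg mulKg.
Qed.

Definition iota_cycle (l k v : nat) : nat :=
  if l <= v < l + k then v.+1 else if v == l + k then l else v.

Definition is_iota_cycle n l k (p : {perm 'I_n}) : Prop :=
  forall x : 'I_n, p x = iota_cycle l k x :> nat.

Lemma val_permV n (p : {perm 'I_n}) (y : 'I_n) v : v < n ->
  (forall x : 'I_n, x = v :> nat -> p x = y) -> p^-1 y = v :> nat.
Proof. by move=> lt_vn pv; rewrite -(pv (Ordinal lt_vn)) ?permK. Qed.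

Lemma iota_cycleV n l k (p : {perm 'I_n}) : l + k < n -> is_iota_cycle l k p ->
  forall y : 'I_n,
  p^-1 y = (if l < y <= l + k then y.-1 else if y == l :> nat then l + k else y) :> nat.
Proof.
move=> lt_lkn p_cyc y; have lt_yn := ltn_ord y.
apply: val_permV => [|x xE]; first by repeat case: ifP; lia.
by apply: ord_inj; rewrite /= p_cyc xE /iota_cycle; repeat case: ifP; lia.
Qed.

Lemma odd_iota_cycle n l k (p : {perm 'I_n}) : l + k < n -> is_iota_cycle l k p ->
  odd_perm p = odd k.
Proof.
elim: k p => [|k IHk] p lt_lkn p_cyc.
  suff -> : p = 1 by rewrite odd_perm1.
  by apply/permP => x; apply: ord_inj; rewrite perm1 p_cyc /iota_cycle; repeat case: ifP; lia.
have lt1 : l + k < n by lia.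
have lt2 : (l + k).+1 < n by lia.
pose t := tperm (Ordinal lt1) (Ordinal lt2).
have tp_cyc : is_iota_cycle l k (t * p).
  move=> x; rewrite permM; case: tpermP => [->|->|nx1 nx2]; rewrite p_cyc /iota_cycle /=.
  - by repeat case: ifP; lia.
  - by repeat case: ifP; lia.
  have {}nx1 : x <> l + k :> nat by move=> e; apply: nx1; apply: ord_inj.
  have {}nx2 : x <> (l + k).+1 :> nat by move=> e; apply: nx2; apply: ord_inj.
  by repeat case: ifP; lia.
rewrite -[p](mulKg t) odd_permM odd_permV (IHk _ lt1 tp_cyc) odd_tperm.
by rewrite -(inj_eq val_inj) /= ltn_eqF.
Qed.

Lemma is_iota_cycleJ n l l' k (p s : {perm 'I_n}) : l + k < n -> l' + k < n ->
  (forall x : 'I_n, l <= x <= l + k -> s x = x - l + l' :> nat) ->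
  is_iota_cycle l k p -> is_iota_cycle l' k (p ^ s).
Proof.
move=> lt_lkn lt_l'kn s_shift p_cyc x; rewrite conjgE !permM.
have [z -> {x}] : exists z, x = s z by exists (s^-1 x); rewrite permKV.
rewrite permK; case: (boolP (l <= z <= l + k)) => z_in.
  have pz_in : l <= p z <= l + k by rewrite p_cyc /iota_cycle; repeat case: ifP; lia.
  by rewrite !s_shift // p_cyc /iota_cycle; repeat case: ifP; lia.
have -> : p z = z by apply: ord_inj; rewrite p_cyc /iota_cycle; repeat case: ifP; lia.
have sz_out : ~~ (l' <= s z <= l' + k).
  apply/negP => sz_in; have lt_n : s z - l' + l < n by lia.
  have sy : s (Ordinal lt_n) = s z by apply: ord_inj; rewrite s_shift /=; lia.
  by move: z_in; rewrite -(perm_inj sy) /=; lia.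
by rewrite /iota_cycle; repeat case: ifP; lia.
Qed.

Lemma Alt_fix_ge2 n (g : {perm 'I_n}) : 1 < n -> g \in 'Alt_('I_n) ->
  (forall x : 'I_n, 2 <= x -> g x = x) -> g = 1.
Proof.
move=> lt1n; rewrite Alt_even => g_even g_fix.
pose x0 := Ordinal (ltnW lt1n); pose x1 := Ordinal lt1n.
have x_cases (x : 'I_n) : [\/ x = x0, x = x1 | 2 <= x].
  by case: x => [[|[|v]] lt_vn]; [apply: Or31 | apply: Or32 | apply: Or33]; try apply: ord_inj.
have g_lt2 (x : 'I_n) : x < 2 -> g x < 2.
  by move=> lt_x2; case: leqP => // /[dup] /g_fix /perm_inj ->; rewrite leqNgt lt_x2.
have x01 : x0 != x1 by rewrite -(inj_eq val_inj).
have [g0|g0|] := x_cases (g x0); last by rewrite leqNgt g_lt2.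
all: have [g1|g1|] := x_cases (g x1); last by rewrite leqNgt g_lt2.
- by case/eqP: x01; apply: (@perm_inj _ g); rewrite g0 g1.
- by apply/permP => x; rewrite perm1; case: (x_cases x) => [->|->|/g_fix].
- suff g_swap : g = tperm x0 x1 by move: g_even; rewrite g_swap odd_tperm x01.
  apply/permP => x; case: (x_cases x) => [->|->|le2x]; rewrite ?tpermL ?tpermR //.
  by rewrite tpermD ?g_fix // -(inj_eq val_inj) /=; apply/eqP => e; move: le2x; rewrite -e.
- by case/eqP: x01; apply: (@perm_inj _ g); rewrite g0 g1.
Qed.

Section AlternatingWords.
Variables (n : nat) (S : seq {perm 'I_n}) (R c : {perm 'I_n}) (i0 w : nat).
Hypothesis S_inv : {in S, forall x, x^-1 \in S}.
Hypothesis R_word : word_le S w R.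
Hypothesis c_word : word_le S w c.
Hypothesis R_succ : forall x : 'I_n, x.+1 < n -> R x = x.+1 :> nat.
Hypothesis lt_i0n : i0 + 2 < n.
Hypothesis c_cyc : is_iota_cycle i0 2 c.

Lemma R_expg s (x : 'I_n) : x + s < n -> (R ^+ s) x = x + s :> nat.
Proof.
elim: s x => [|s IHs] x lt_xsn; first by rewrite expg0 perm1 addn0.
by rewrite expgSr permM R_succ IHs; lia.
Qed.

Lemma R_expgV s (x : 'I_n) : s <= x -> (R ^+ s)^-1 x = x - s :> nat.
Proof.
move=> le_sx; have lt_xn := ltn_ord x.
by apply: val_permV => [|y yE]; [lia | apply: ord_inj; rewrite R_expg yE; lia].
Qed.

Definition c_at k := c ^ ((R ^+ i0)^-1 * R ^+ k).

Lemma c_at_cycle k : k + 2 < n -> is_iota_cycle k 2 (c_at k).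
Proof.
move=> lt_kn; apply: is_iota_cycleJ c_cyc => // x x_in.
by rewrite permM R_expg R_expgV; lia.
Qed.

Lemma c_at_Alt k : c_at k \in 'Alt_('I_n).
Proof. by rewrite Alt_even odd_permJ (odd_iota_cycle _ c_cyc). Qed.

Lemma c_at_word k : word_le S (w * (2 * (i0 + k) + 1)) (c_at k).
Proof.
have wRk j : word_le S (w * j) (R ^+ j) by apply: word_leX.
apply: (word_leW (word_leJ S_inv c_word (word_leM (word_leV S_inv (wRk i0)) (wRk k)))).
nia.
Qed.

Definition chain k d := \prod_(j < d) c_at (k + j).

(* The product telescopes, so that [chain k d] costs O(i0 + k + d) shifts
   rather than O(d (i0 + k)). *)
Lemma chainE k d :
  chain k d = ((c * R^-1) ^+ d) ^ ((R ^+ i0)^-1 * R ^+ k) * R ^+ d.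
Proof.
set z := (R ^+ i0)^-1 * R ^+ k.
have Rz : R^-1 ^ z = R^-1.
  apply/conjg_fixP/commgP/commute_sym/commuteV/commute_sym.
  by apply: commuteM; [apply: commuteV|]; apply/commuteX/commute_refl.
rewrite conjXg conjMg Rz -prod_conjg_expg /chain.
by apply: eq_bigr => j _; rewrite /c_at expgD mulgA conjgM.
Qed.

Lemma chain_word k d : word_le S (w * (2 * (i0 + k) + 3 * d)) (chain k d).
Proof.
have wRk j : word_le S (w * j) (R ^+ j) by apply: word_leX.
have w_cR : word_le S ((w + w) * d) ((c * R^-1) ^+ d).
  exact/word_leX/(word_leM c_word (word_leV S_inv R_word)).
rewrite chainE; apply: (word_leW (word_leM (word_leJ S_inv w_cR
  (word_leM (word_leV S_inv (wRk i0)) (wRk k))) (wRk d))).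
nia.
Qed.

Lemma chainS k d : chain k d.+1 = chain k d * c_at (k + d).
Proof. by rewrite /chain big_ord_recr. Qed.

Lemma chain_Alt k d : chain k d \in 'Alt_('I_n).
Proof. by apply: group_prod => j _; apply: c_at_Alt. Qed.

Lemma chain_lift k d (x : 'I_n) : k + d + 1 < n -> x = k.+1 :> nat ->
  chain k d x = k.+1 + d :> nat.
Proof.
move=> lt_n xE; elim: d lt_n => [|d IHd] lt_n; first by rewrite /chain big_ord0 perm1 addn0.
by rewrite chainS permM c_at_cycle ?IHd /iota_cycle; [repeat case: ifP|..]; lia.
Qed.

Lemma chain_fix k d (x : 'I_n) : k + d + 1 < x -> chain k d x = x.
Proof.
elim: d => [|d IHd] lt_x; first by rewrite /chain big_ord0 perm1.
have lt_xn := ltn_ord x.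
rewrite chainS permM IHd; last lia.
by apply: ord_inj; rewrite c_at_cycle /iota_cycle; [repeat case: ifP|]; lia.
Qed.

Lemma Alt_word_move m (y : 'I_n) : 2 <= m < n -> y < m ->
  exists P, [/\ P \in 'Alt_('I_n), word_le S (7 * w * n) P, P y = m :> nat
              & forall x : 'I_n, m < x -> P x = x].
Proof.
move=> m_bounds lt_ym; case: (ltnP 0 y) => [y_gt0 | y_le0].
  exists (chain y.-1 (m - y)); split.
  - exact: chain_Alt.
  - by apply: (word_leW (chain_word y.-1 (m - y))); nia.
  - by rewrite chain_lift; lia.
  - by move=> x lt_mx; rewrite chain_fix //; lia.
exists (c_at 0 * chain 0 m.-1); split.
- by rewrite groupM ?c_at_Alt ?chain_Alt.
- by apply: (word_leW (word_leM (c_at_word 0) (chain_word 0 m.-1))); nia.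
- rewrite permM chain_lift; try lia.
  by rewrite c_at_cycle /iota_cycle; [case: ifP|]; lia.
- move=> x lt_mx; have lt_xn := ltn_ord x.
  have c0x : c_at 0 x = x.
    by apply: ord_inj; rewrite c_at_cycle /iota_cycle; [repeat case: ifP|]; lia.
  by rewrite permM c0x chain_fix //; lia.
Qed.

Lemma Alt_fix_word m (g : {perm 'I_n}) : g \in 'Alt_('I_n) ->
  (forall x : 'I_n, m <= x -> g x = x) -> word_le S (m * (7 * w * n)) g.
Proof.
elim: m g => [|m IHm] g gA g_fix.
  have -> : g = 1 by apply: (Alt_fix_ge2 _ gA) => [|x _]; [lia | apply: g_fix].
  exact: word_le1.
have IHm_weak h : h \in 'Alt_('I_n) -> (forall x : 'I_n, m <= x -> h x = x) ->
    word_le S (m.+1 * (7 * w * n)) h.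
  by move=> hA h_fix; apply: (word_leW (IHm h hA h_fix)); rewrite leq_mul2r leqnSn orbT.
case: (leqP m 1) => [le_m1 | lt1m].
  have -> : g = 1 by apply: (Alt_fix_ge2 _ gA) => [|x le2x]; [|apply: g_fix]; lia.
  exact: (word_leW (word_le1 _)).
case: (leqP n m) => [le_nm | lt_mn].
  by apply: IHm_weak => // x; have := ltn_ord x; lia.
pose xm := Ordinal lt_mn.
have le_gm : g xm <= m.
  by case: leqP => // /[dup] /g_fix /perm_inj -> /=; lia.
have [gm | ne_gm] := eqVneq (g xm : nat) m.
  apply: IHm_weak => // x le_mx; case: (ltnP m x) => [lt_mx | le_xm]; first exact: g_fix.
  have -> : x = xm by apply: ord_inj => /=; lia.
  exact: ord_inj.
have [P [PA P_word P_gm P_fix]] := @Alt_word_move m (g xm) ltac:(lia) ltac:(lia).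
have gP_fix (x : 'I_n) : m <= x -> (g * P) x = x.
  rewrite permM; case: (ltnP m x) => [lt_mx _ | le_xm le_mx]; first by rewrite g_fix // P_fix.
  have -> : x = xm by apply: ord_inj => /=; lia.
  by apply: ord_inj; rewrite P_gm.
have := word_leM (IHm _ (groupM gA PA) gP_fix) (word_leV S_inv P_word).
by rewrite mulgK mulSn addnC.
Qed.

Lemma Alt_word g : g \in 'Alt_('I_n) -> word_le S (n * (7 * w * n)) g.
Proof. by move=> gA; apply: Alt_fix_word => // x; have := ltn_ord x; lia. Qed.

End AlternatingWords.

Lemma index_iota l k v : l <= v < l + k -> index v (iota l k) = v - l.
Proof.
move=> v_in; have vE : nth 0 (iota l k) (v - l) = v by rewrite nth_iota; lia.
by rewrite -{1}vE index_uniq ?size_iota ?iota_uniq //; lia.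
Qed.

Lemma next_iota l k v : next (iota l k.+1) v = iota_cycle l k v.
Proof.
rewrite next_nth mem_iota /iota_cycle; case: ifP => v_in; last by repeat case: ifP; lia.
rewrite index_iota //= -/(iota l.+1 k).
case: (ltnP (v - l) k) => [lt_k | le_k]; first by rewrite nth_iota //; repeat case: ifP; lia.
by rewrite nth_default ?size_iota //; repeat case: ifP; lia.
Qed.

Lemma filter_iota_geq c n : c <= n -> [seq i <- iota 0 n | c <= i] = iota c (n - c).
Proof.
move=> le_cn; rewrite -{1}(subnKC le_cn) iotaD filter_cat add0n.
rewrite (@eq_in_filter _ _ pred0 (iota 0 c)) => [|x]; last by rewrite mem_iota /=; lia.
by rewrite filter_pred0 /=; apply/all_filterP/allP => x; rewrite mem_iota; lia.
Qed.

Lemma cyc_filter_enum n (P : pred nat) l k :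
  [seq i <- iota 0 n | P i] = iota l k.+1 ->
  is_iota_cycle l k (cyc [seq i : 'I_n <- enum 'I_n | P i]).
Proof.
have uniq_enum : uniq (enum 'I_n) by apply: enum_uniq.
move=> P_iota x; rewrite /cyc permE /cyc_fun filter_uniq //.
rewrite -next_iota -P_iota -val_enum_ord filter_map -(next_map val_inj) //.
exact: filter_uniq.
Qed.

Section Puzzle.
Variables a b : nat.
Hypotheses (lt1a : 1 < a) (lt1b : 1 < b).
Local Notation n := (a + b - 1).
Local Notation alpha := (puzzle_alpha a b).
Local Notation beta := (puzzle_beta a b).
Local Notation shifts := (puzzle_shifts a b).

Lemma puzzle_alpha_cycle : is_iota_cycle 0 (a - 1) alpha.
Proof.
apply: (@cyc_filter_enum _ (fun i => i < a)).
by rewrite (filter_iota_ltn 0 (j := a)) ?subn1 ?prednK //; lia.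
Qed.

Lemma puzzle_beta_cycle : is_iota_cycle (a - 1) (b - 1) beta.
Proof.
apply: (@cyc_filter_enum _ (fun i => a - 1 <= i)).
by rewrite filter_iota_geq; [congr iota|]; lia.
Qed.

Lemma puzzle_shift_up (x : 'I_n) : x.+1 < n -> (beta * alpha) x = x.+1 :> nat.
Proof.
move=> lt_xn; rewrite permM puzzle_alpha_cycle puzzle_beta_cycle /iota_cycle.
by repeat case: ifP; lia.
Qed.

Lemma puzzle_commutator_cycle :
  is_iota_cycle (a - 2) 2 (alpha * beta^-1 * alpha^-1 * beta).
Proof.
move=> x; have lt_xn := ltn_ord x; rewrite !permM puzzle_beta_cycle.
have := iota_cycleV _ puzzle_alpha_cycle ((beta^-1) (alpha x)).
have := iota_cycleV _ puzzle_beta_cycle (alpha x).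
have := puzzle_alpha_cycle x.
move: (nat_of_ord (alpha^-1 _)) (nat_of_ord (beta^-1 _)) (nat_of_ord (alpha x)) => y3 y2 y1.
rewrite /iota_cycle; repeat (case: ifP => ?; try (intros; lia)).
Qed.

Lemma puzzle_shifts_inv : {in shifts, forall x, x^-1 \in shifts}.
Proof. by move=> x; rewrite !inE => /or4P[] /eqP ->; rewrite ?invgK eqxx ?orbT. Qed.

Lemma puzzle_shifts_sub : {subset shifts <= puzzle_group a b}.
Proof.
move=> x; rewrite /puzzle_group !inE => /or4P[] /eqP ->; rewrite ?groupV;
  by apply: mem_gen; rewrite !inE eqxx ?orbT.
Qed.

Lemma puzzle_Alt_word g : g \in 'Alt_('I_n) -> word_le shifts (28 * n ^ 2) g.
Proof.
have letter x : x \in shifts -> word_le shifts 1 x by apply: word_le_letter.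
have w_alpha : word_le shifts 1 alpha by apply: letter; rewrite !inE eqxx.
have w_beta : word_le shifts 1 beta by apply: letter; rewrite !inE eqxx ?orbT.
have w_R : word_le shifts 4 (beta * alpha) by exact: word_leW (word_leM w_beta w_alpha) _.
have w_c : word_le shifts 4 (alpha * beta^-1 * alpha^-1 * beta).
  have w_inv := word_leV puzzle_shifts_inv.
  exact: word_leM (word_leM (word_leM w_alpha (w_inv _ _ w_beta)) (w_inv _ _ w_alpha)) w_beta.
have lt_n : a - 2 + 2 < n by lia.
move=> gA; apply: (word_leW (Alt_word puzzle_shifts_inv w_R w_c puzzle_shift_up lt_n
  puzzle_commutator_cycle gA)).
nia.
Qed.

Lemma odd_puzzle_alpha : odd_perm alpha = ~~ odd a.
Proof. by rewrite (odd_iota_cycle _ puzzle_alpha_cycle) ?odd_sub ?addbT //; lia. Qed.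

Lemma odd_puzzle_beta : odd_perm beta = ~~ odd b.
Proof. by rewrite (odd_iota_cycle _ puzzle_beta_cycle) ?odd_sub ?addbT //; lia. Qed.

Lemma puzzle_group_Alt : odd a && odd b -> puzzle_group a b = 'Alt_('I_n).
Proof.
case/andP=> odd_a odd_b; apply/eqP; rewrite eqEsubset; apply/andP; split.
  by rewrite gen_subG subUset !sub1set !Alt_even odd_puzzle_alpha odd_puzzle_beta odd_a odd_b.
by apply/subsetP => g /puzzle_Alt_word; apply: word_le_mem puzzle_shifts_sub.
Qed.

Lemma puzzle_odd_word g : ~~ (odd a && odd b) -> word_le shifts (29 * n ^ 2) g.
Proof.
move=> not_odd; have [gA | g_odd] := boolP (g \in 'Alt_('I_n)).
  by apply: (word_leW (puzzle_Alt_word gA)); nia.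
have [p p_shift p_odd] : exists2 p, p \in shifts & odd_perm p.
  move: not_odd; rewrite negb_and -odd_puzzle_alpha -odd_puzzle_beta.
  case/orP=> [alpha_odd | beta_odd]; [exists alpha | exists beta];
    by rewrite // !inE eqxx ?orbT.
have pgA : p^-1 * g \in 'Alt_('I_n).
  by move: g_odd; rewrite !Alt_even odd_permM odd_permV p_odd negbK => ->.
rewrite -(mulKVg p g).
by apply: (word_leW (word_leM (word_le_letter p_shift) (puzzle_Alt_word pgA))); nia.
Qed.

Lemma puzzle_group_Sym : ~~ (odd a && odd b) -> puzzle_group a b = 'Sym_('I_n).
Proof.
move=> not_odd; apply/eqP; rewrite eqEsubset subsetT /=.
by apply/subsetP => g _; apply: word_le_mem puzzle_shifts_sub (puzzle_odd_word g not_odd).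
Qed.

Lemma puzzle_group_word g : g \in puzzle_group a b -> word_le shifts (29 * n ^ 2) g.
Proof.
have [ab_odd | not_odd] := boolP (odd a && odd b); last by move=> _; apply: puzzle_odd_word.
by rewrite puzzle_group_Alt // => /puzzle_Alt_word gA; apply: (word_leW gA); nia.
Qed.

End Puzzle.

Local Close Scope group_scope.

Theorem theorem1 :
  (forall a b : nat, 1 < a -> 1 < b ->
     (odd a && odd b -> puzzle_group a b = ('Alt_('I_(a + b - 1)))%g) /\
     (~~ (odd a && odd b) -> puzzle_group a b = ('Sym_('I_(a + b - 1)))%g)) /\
  (exists K : nat, forall a b : nat, 1 < a -> 1 < b ->
     forall g, g \in puzzle_group a b ->
       exists s : seq {perm 'I_(a + b - 1)},
         [/\ all (fun x => x \in puzzle_shifts a b) s,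
             size s <= K * (a + b - 1) ^ 2
           & g = (\prod_(x <- s) x)%g]).
Proof.
split=> [a b lt1a lt1b | ].
  by split; [apply: puzzle_group_Alt | apply: puzzle_group_Sym].
by exists 29 => a b lt1a lt1b g /puzzle_group_word; apply.
Qed.
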